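(* In the setting below, let $\sigma,\tau>0$ satisfy $\sigma\tau\|A\|^2+\tau L\le1$ and let $(x^{(k)},z^{(k)})$ be generated either by the Bregman primal Condat--V\~u algorithm \[x^{(k+1)}=\mathrm{prox}^{\phi_{\mathrm p}}_{\tau f}\big(x^{(k)},\tau A^Tz^{(k)}+\tau\nabla h(x^{(k)})\big),\quad z^{(k+1)}=\mathrm{prox}^{\phi_{\mathrm d}}_{\sigma g^*}\big(z^{(k)},-\sigma A(2x^{(k+1)}-x^{(k)})\big),\] or by the Bregman dual Condat--V\~u algorithm \[z^{(k+1)}=\mathrm{prox}^{\phi_{\mathrm d}}_{\sigma g^*}\big(z^{(k)},-\sigma Ax^{(k)}\big),\quad x^{(k+1)}=\mathrm{prox}^{\phi_{\mathrm p}}_{\tau f}\big(x^{(k)},\tau A^T(2z^{(k+1)}-z^{(k)})+\tau\nabla h(x^{(k)})\big),\] starting from $x^{(0)}\in\operatorname{int}(\operatorname{dom}\phi_{\mathrm p})\cap\operatorname{dom} h$, $z^{(0)}\in\operatorname{int}(\operatorname{dom}\phi_{\mathrm d})$. Let $x^{(k)}_{\mathrm{avg}}=\frac1k\sum_{i=1}^kx^{(i)}$, $z^{(k)}_{\mathrm{avg}}=\frac1k\sum_{i=1}^kz^{(i)}$ for $k\ge1$. Then for all $k\ge1$, all $x\in\operatorname{dom} f\cap\operatorname{dom}\phi_{\mathrm p}$ and all $z\in\operatorname{dom} g^*\cap\operatorname{dom}\phi_{\mathrm d}$, \[\mathcal L(x^{(k)}_{\mathrm{avg}},z)-\mathcal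 L(x,z^{(k)}_{\mathrm{avg}})\le\frac2k\Big(\frac1\tau d_{\mathrm p}(x,x^{(0)})+\frac1\sigma d_{\mathrm d}(z,z^{(0)})\Big).\]
   Context: Setting: $f:\mathbb R^n\to\mathbb R\cup\{+\infty\}$, $g:\mathbb R^m\to\mathbb R\cup\{+\infty\}$, $h$ are closed convex functions, $h$ differentiable on its open convex domain, $f+h$ and $g$ proper, $A\in\mathbb R^{m\times n}$; $g^*$ is the conjugate of $g$. Lagrangian: $\mathcal L(x,z)=f(x)+h(x)+\langle z,Ax\rangle-g^*(z)$ (value $+\infty$ if $x\notin\operatorname{dom}(f+h)$, $-\infty$ if $x\in\operatorname{dom}(f+h)$, $z\notin\operatorname{dom}g^*$). A Bregman kernel $\phi$ is convex with $\operatorname{int}(\operatorname{dom}\phi)\neq\emptyset$, continuous on $\operatorname{dom}\phi$, continuously differentiable on $\operatorname{int}(\operatorname{dom}\phi)$; its distance is $d(x,y)=\phi(x)-\phi(y)-\langle\nabla\phi(y),x-y\rangle$ on $\operatorname{dom}\phi\times\operatorname{int}(\operatorname{dom}\phi)$, and $\mathrm{prox}^\phi_F(y,a)=\operatorname{argmin}_x\big(F(x)+\langle a,x\rangle+d(x,y)\big)$, assumed for every $a$ and $y\in\operatorname{int}(\operatorname{dom}\phi)$ to be a unique point of $\operatorname{int}(\operatorname{dom}\phi)$. Kernels $\phi_{\mathrm p}$ on $\mathbb R^n$, $\phi_{\mathrm d}$ on $\mathbb R^m$ have distances $d_{\mathrm p},d_{\mathrm d}$ with $d_{\mathrm p}(x,x')\ge\frac12\|x-x'\|_{\mathrm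 p}^2$, $d_{\mathrm d}(z,z')\ge\frac12\|z-z'\|_{\mathrm d}^2$ for norms $\|\cdot\|_{\mathrm p},\|\cdot\|_{\mathrm d}$. Also $\operatorname{dom}\phi_{\mathrm p}\subseteq\operatorname{dom}h$ and $h(x)-h(x')-\langle\nabla h(x'),x-x'\rangle\le L\,d_{\mathrm p}(x,x')$ for all $(x,x')\in\operatorname{dom}d_{\mathrm p}$, for some $L>0$. $\|A\|=\sup_{u\ne0,v\ne0}\langle v,Au\rangle/(\|v\|_{\mathrm d}\|u\|_{\mathrm p})$. The optimality conditions $0\in\partial f(x)+\nabla h(x)+A^Tz$, $0\in\partial g^*(z)-Ax$ have a solution $(x^\star,z^\star)\in\operatorname{dom}\phi_{\mathrm p}\times\operatorname{dom}\phi_{\mathrm d}$. *)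

(* Vectors of R^n are column
   vectors 'cV[R]_n over an abstract R : realType; functions with values in
   R \cup {+oo} are functions into \bar R together with the hypothesis that
   they never take the value -oo. *)
From HB Require Import structures.
From mathcomp Require Import all_boot all_order all_algebra.
From mathcomp Require Import all_classical all_reals all_analysis.
Set Implicit Arguments. Unset Strict Implicit. Unset Printing Implicit Defensive.
Import Order.TTheory GRing.Theory Num.Theory.
Import numFieldNormedType.Exports.
Local Open Scope classical_set_scope.
Local Open Scope ring_scope.

Section Defs.
Variable R : realType.

Definition dot (n : nat) (u v : 'cV[R]_n) : R := \sum_(i < n) u i 0 * v i 0.

Definition edom (n : nat) (F : 'cV[R]_n -> \bar R) : set 'cV[R]_n :=
  [set x | (F x < +oo)%E].

Definition no_minf (n : nat) (F : 'cV[R]_n -> \bar R) := forall x, F x != -oo%E.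

Definition proper_fun (n : nat) (F : 'cV[R]_n -> \bar R) :=
  no_minf F /\ exists x, (F x < +oo)%E.

Definition convex_fun (n : nat) (F : 'cV[R]_n -> \bar R) :=
  forall (x y : 'cV[R]_n) (t : R), 0 < t < 1 ->
    (F (t *: x + (1 - t) *: y)%R <= t%:E * F x + (1 - t)%:E * F y)%E.

Definition closed_fun (n : nat) (F : 'cV[R]_n -> \bar R) :=
  closed [set p : 'cV[R]_n * R | (F p.1 <= p.2%:E)%E].

(* real-valued version of F (meaningful on its domain) *)
Definition rfun (n : nat) (F : 'cV[R]_n -> \bar R) : 'cV[R]_n -> R :=
  fun x => fine (F x).

Definition grad (n : nat) (F : 'cV[R]_n -> R) (x : 'cV[R]_n) : 'cV[R]_n :=
  \col_(i < n) ('d F x (delta_mx i 0 : 'cV[R]_n)).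

Definition diff_at (n : nat) (F : 'cV[R]_n -> R) (x : 'cV[R]_n) :=
  differentiable F x.

Definition conj_fun (m : nat) (g : 'cV[R]_m -> \bar R) : 'cV[R]_m -> \bar R :=
  fun z => ereal_sup [set ((dot z y)%:E - g y)%E | y in [set: 'cV[R]_m]].

Definition bregman_kernel (n : nat) (phi : 'cV[R]_n -> \bar R) :=
  [/\ no_minf phi, convex_fun phi, interior (edom phi) !=set0 &
      [/\
      {within edom phi, continuous (rfun phi)},
      (forall y, interior (edom phi) y -> diff_at (rfun phi) y) &
      (forall y, interior (edom phi) y -> {for y, continuous (grad (rfun phi))})]].

(* Bregman distance d(x,y), defined on dom phi x int dom phi; it is +oo when
   x is outside dom phi (so that prox minimizes over dom phi). *)
Definition breg (n : nat) (phi : 'cV[R]_n -> \bar R) (x y : 'cV[R]_n) : \bar R :=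
  if (phi x < +oo)%E
  then (phi x - phi y - (dot (grad (rfun phi) y) (x - y)%R)%:E)%E
  else +oo%E.

(* x is a minimizer of  x' |-> F(x') + <a,x'> + d(x',y),
   i.e. x is in prox^phi_F(y,a) *)
Definition is_prox (n : nat) (phi F : 'cV[R]_n -> \bar R) (y a x : 'cV[R]_n) :=
  forall x', (F x + (dot a x)%:E + breg phi x y <=
              F x' + (dot a x')%:E + breg phi x' y)%E.

Definition prox_well_defined (n : nat) (phi F : 'cV[R]_n -> \bar R) :=
  forall a y, interior (edom phi) y ->
    exists x, [/\ interior (edom phi) x, is_prox phi F y a x &
                  forall x', is_prox phi F y a x' -> x' = x].

Definition is_norm (n : nat) (N : 'cV[R]_n -> R) :=
  [/\ forall x y, N (x + y) <= N x + N y,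
      forall (a : R) x, N (a *: x) = `|a| * N x &
      forall x, N x = 0 -> x = 0].

Definition op_norm (m n : nat) (np : 'cV[R]_n -> R) (nd : 'cV[R]_m -> R)
  (A : 'M[R]_(m, n)) : R :=
  sup [set r : R | exists (u : 'cV[R]_n) (v : 'cV[R]_m),
        [/\ u != 0, v != 0 & r = dot v (A *m u) / (nd v * np u)]].

Definition subgrad (n : nat) (F : 'cV[R]_n -> \bar R) (x s : 'cV[R]_n) :=
  (F x < +oo)%E /\ forall y, (F x + (dot s (y - x))%:E <= F y)%E.

Definition lagr (m n : nat) (f h : 'cV[R]_n -> \bar R) (gs : 'cV[R]_m -> \bar R)
  (A : 'M[R]_(m, n)) (x : 'cV[R]_n) (z : 'cV[R]_m) : \bar R :=
  if ~~ (f x + h x < +oo)%E then +oo%E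
  else if ~~ (gs z < +oo)%E then -oo%E
  else (f x + h x + (dot z (A *m x))%:E - gs z)%E.

Definition avg (n : nat) (xs : nat -> 'cV[R]_n) (k : nat) : 'cV[R]_n :=
  k%:R^-1 *: \sum_(1 <= i < k.+1) xs i.

Definition primal_CV (m n : nat) (phip : 'cV[R]_n -> \bar R)
  (phid : 'cV[R]_m -> \bar R) (f h : 'cV[R]_n -> \bar R)
  (gs : 'cV[R]_m -> \bar R) (A : 'M[R]_(m, n)) (sigma tau : R)
  (xs : nat -> 'cV[R]_n) (zs : nat -> 'cV[R]_m) :=
  forall k,
    is_prox phip (fun x => tau%:E * f x)%E (xs k)
      (tau *: (A^T *m zs k) + tau *: grad (rfun h) (xs k)) (xs k.+1) /\
    is_prox phid (fun z => sigma%:E * gs z)%E (zs k)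
      (- sigma *: (A *m (2%:R *: xs k.+1 - xs k))) (zs k.+1).

Definition dual_CV (m n : nat) (phip : 'cV[R]_n -> \bar R)
  (phid : 'cV[R]_m -> \bar R) (f h : 'cV[R]_n -> \bar R)
  (gs : 'cV[R]_m -> \bar R) (A : 'M[R]_(m, n)) (sigma tau : R)
  (xs : nat -> 'cV[R]_n) (zs : nat -> 'cV[R]_m) :=
  forall k,
    is_prox phid (fun z => sigma%:E * gs z)%E (zs k)
      (- sigma *: (A *m xs k)) (zs k.+1) /\
    is_prox phip (fun x => tau%:E * f x)%E (xs k)
      (tau *: (A^T *m (2%:R *: zs k.+1 - zs k)) + tau *: grad (rfun h) (xs k))
      (xs k.+1).

End Defs.

(* The three-point
   inequality of a Bregman prox, together with convexity and relative
   smoothness of h, bounds the primal and the dual part of the Lagrangian gap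
   at the new iterate.  With the energy
     E_i = d_p(x, x_i)/tau + d_d(z, z_i)/sigma + s <z_i - z, A (x_i - x)>,
   s = -1 for the primal and s = 1 for the dual variant, the coupling terms
   telescope: gap_(i+1) <= E_i - E_(i+1) + r_i, where the remainder
   r_i = -s <z_(i+1) - z_i, A (x_(i+1) - x_i)> + L d_p - d_p/tau - d_d/sigma
   is nonpositive by Young's inequality and the step-size condition, since the
   kernels are strongly convex and <v, A u> <= ||A|| ||v||_d ||u||_p (finite
   because all norms on R^n are equivalent).  The same inequality gives
   0 <= E_i <= 2 (d_p(x, x_i)/tau + d_d(z, z_i)/sigma), so the first k gaps
   sum to at most 2 (d_p(x, x_0)/tau + d_d(z, z_0)/sigma), and Jensen's
   inequality (convexity in x, concavity in z) transfers the bound to the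
   averaged iterates. *)

From HB Require Import structures.
From mathcomp Require Import all_boot all_order all_algebra.
From mathcomp Require Import all_classical all_reals all_analysis.
From mathcomp Require Import ring lra.
Import Order.TTheory GRing.Theory Num.Theory.
Import numFieldNormedType.Exports.
Local Open Scope classical_set_scope.
Local Open Scope ring_scope.

Set Implicit Arguments.
Unset Strict Implicit.

Section InnerProduct.
Variables (R : realType) (n : nat).
Implicit Types u v w : 'cV[R]_n.

Lemma dotE u v : dot u v = (u^T *m v) 0 0.
Proof. by rewrite /dot mxE; apply: eq_bigr => i _; rewrite mxE. Qed.

Lemma dotC u v : dot u v = dot v u.
Proof. by apply: eq_bigr => i _; rewrite mulrC. Qed.

Lemma dotDl u v w : dot (u + v) w = dot u w + dot v w.
Proof. by rewrite !dotE linearD mulmxDl mxE. Qed.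

Lemma dotZl a u w : dot (a *: u) w = a * dot u w.
Proof. by rewrite !dotE linearZ -scalemxAl mxE. Qed.

Lemma dotNl u w : dot (- u) w = - dot u w.
Proof. by rewrite -scaleN1r dotZl mulN1r. Qed.

Lemma dotBl u v w : dot (u - v) w = dot u w - dot v w.
Proof. by rewrite dotDl dotNl. Qed.

Lemma dotDr u v w : dot w (u + v) = dot w u + dot w v.
Proof. by rewrite dotC dotDl !(dotC w). Qed.

Lemma dotZr a u w : dot w (a *: u) = a * dot w u.
Proof. by rewrite dotC dotZl dotC. Qed.

Lemma dotNr u w : dot w (- u) = - dot w u.
Proof. by rewrite dotC dotNl dotC. Qed.

Lemma dotBr u v w : dot w (u - v) = dot w u - dot w v.
Proof. by rewrite dotDr dotNr. Qed.

Lemma dot0r w : dot w 0 = 0.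
Proof. by rewrite -(scale0r 0) dotZr mul0r. Qed.

Lemma dot0l w : dot 0 w = 0.
Proof. by rewrite dotC dot0r. Qed.

Lemma dot_sumr w I (r : seq I) (P : pred I) (F : I -> 'cV[R]_n) :
  dot w (\sum_(i <- r | P i) F i) = \sum_(i <- r | P i) dot w (F i).
Proof. by apply: (big_morph (dot w)) => [u v|]; rewrite ?dotDr ?dot0r. Qed.

Lemma dot_suml w I (r : seq I) (P : pred I) (F : I -> 'cV[R]_n) :
  dot (\sum_(i <- r | P i) F i) w = \sum_(i <- r | P i) dot (F i) w.
Proof.
by apply: (big_morph (fun u => dot u w)) => [u v|]; rewrite ?dotDl ?dot0l.
Qed.

End InnerProduct.

Lemma dot_trmx (R : realType) m n (A : 'M[R]_(m, n)) z u :
  dot (A^T *m z) u = dot z (A *m u).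
Proof. by rewrite !dotE trmx_mul trmxK mulmxA. Qed.

Lemma dot_mulmxBB (R : realType) m n (A : 'M[R]_(m, n)) (z1 z0 : 'cV[R]_m) x1 x0 :
  dot (z1 - z0) (A *m (x1 - x0)) =
  dot z1 (A *m x1) - dot z1 (A *m x0) - dot z0 (A *m x1) + dot z0 (A *m x0).
Proof. by rewrite mulmxBr dotBl !dotBr opprB addrA addrAC. Qed.

Lemma mxE_le_mx_norm (R : realType) p q (M : 'M[R]_(p, q)) i j : `|M i j| <= `|M|.
Proof.
rewrite [leRHS]/Num.norm /= mx_normrE.
by apply/bigmax_geP; right; exists (i, j).
Qed.

Section FiniteDimensionalNorm.
Variables (R : realType) (n : nat) (N : 'cV[R]_n -> R).
Hypothesis N_norm : is_norm N.

Lemma is_normD u v : N (u + v) <= N u + N v.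
Proof. by case: N_norm. Qed.

Lemma is_normZ a u : N (a *: u) = `|a| * N u.
Proof. by case: N_norm. Qed.

Lemma is_norm0 : N 0 = 0.
Proof. by rewrite -(scale0r 0) is_normZ normr0 mul0r. Qed.

Lemma is_normN u : N (- u) = N u.
Proof. by rewrite -scaleN1r is_normZ normrN normr1 mul1r. Qed.

Lemma is_normB u v : N (u - v) = N (v - u).
Proof. by rewrite -is_normN opprB. Qed.

Lemma is_norm_ge0 u : 0 <= N u.
Proof. by have := is_normD u (- u); rewrite subrr is_norm0 is_normN; lra. Qed.

Lemma is_norm_gt0 u : u != 0 -> 0 < N u.
Proof.
move=> u0; rewrite lt_def is_norm_ge0 andbT.
by apply: contra u0 => /eqP Nu0; case: N_norm => _ _ /(_ u Nu0) ->.
Qed.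

Lemma is_norm_sum_le I (r : seq I) (P : pred I) (F : I -> 'cV[R]_n) :
  N (\sum_(i <- r | P i) F i) <= \sum_(i <- r | P i) N (F i).
Proof.
elim/big_rec2: _ => [|i y x _ hy]; first by rewrite is_norm0.
exact: le_trans (is_normD _ _) (lerD _ hy).
Qed.

Lemma is_norm_le_mx_norm (r : 'rV[R]_n) :
  N r^T <= `|r| * \sum_i N (delta_mx i 0).
Proof.
have -> : r^T = \sum_i r 0 i *: delta_mx i 0.
  by rewrite [LHS]matrix_sum_delta; apply: eq_bigr => i _; rewrite big_ord1 mxE.
rewrite mulr_sumr; apply: le_trans (is_norm_sum_le _ _ _) (ler_sum _ _) => i _.
by rewrite is_normZ ler_wpM2r ?is_norm_ge0 ?mxE_le_mx_norm.
Qed.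

Lemma is_norm_continuous : continuous (fun r : 'rV[R]_n => N r^T).
Proof.
move=> r; set C := \sum_i N (delta_mx i 0 : 'cV[R]_n).
have C0 : 0 <= C by apply: sumr_ge0 => i _; apply: is_norm_ge0.
apply/(@cvgrPdist_lt _ _ _ (nbhs r)) => e e0.
have eC : 0 < e / (C + 1) by rewrite divr_gt0 // ltr_wpDl.
near=> s.
have rs : `|r - s| < e / (C + 1).
  by near: s; apply: cvgr_dist_lt => //; exact: cvg_id.
have Nrs : N (r^T - s^T) <= `|r - s| * C by rewrite -linearB is_norm_le_mx_norm.
have := is_normD (r^T - s^T) s^T; have := is_normD (s^T - r^T) r^T.
rewrite !subrK is_normB.
have : `|r - s| * C <= e / (C + 1) * C by rewrite ler_wpM2r // ltW.
have : e / (C + 1) * C < e by rewrite mulrAC ltr_pdivrMr ?ltr_wpDl //; nra.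
rewrite ltr_norml; move=> *; apply/andP; split; lra.
Unshelve. all: by end_near.
Qed.

(* [N] attains a positive minimum on the compact unit sphere of the max-norm. *)
Lemma is_norm_ge_mx_norm :
  exists2 c, 0 < c & forall r : 'rV[R]_n, c * `|r| <= N r^T.
Proof.
pose S := [set r : 'rV[R]_n | `|r| = 1].
have normalize r : r != 0 -> S (`|r|^-1 *: r).
  move=> r0; rewrite /S /= normrZ normrV ?unitfE ?normr_eq0 // normr_id.
  by rewrite mulVf // normr_eq0.
have [[s Ss]|S0] := pselect (S !=set0); last first.
  exists 1 => // r; have [->|r0] := eqVneq r 0.
    by rewrite normr0 mulr0 is_norm_ge0.
  by exfalso; apply: S0; exists (`|r|^-1 *: r); exact: normalize.
have cS : compact S.
  apply: bounded_closed_compact.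
    exists 1; split; first by rewrite realE ler01.
    by move=> M M1 r; rewrite /S /= => ->; exact: ltW.
  have -> : S = Num.norm @^-1` [set 1] by [].
  apply: preimage_closed; last exact: closed_eq.
  by move=> r _; exact: norm_continuous.
have [c /set_mem Sc cmin] := compact_EVT_min (ex_intro _ s Ss) cS
   (continuous_subspaceT is_norm_continuous).
have c0 : c != 0 by apply/eqP => c0; move: Sc; rewrite /S /= c0 normr0; lra.
exists (N c^T); first by rewrite is_norm_gt0 // trmx_eq0.
move=> r; have [->|r0] := eqVneq r 0; first by rewrite normr0 mulr0 is_norm_ge0.
have := cmin _ (mem_set (normalize r r0)).
rewrite linearZ /= is_normZ normrV ?unitfE ?normr_eq0 // normr_id.
by rewrite ler_pdivlMl ?normr_gt0 // mulrC.
Qed.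

End FiniteDimensionalNorm.

Section OperatorNorm.
Variables (R : realType) (m n : nat) (A : 'M[R]_(m, n)).

Lemma dot_le_mx_norm (u : 'cV[R]_n) (v : 'cV[R]_m) :
  dot v (A *m u) <= (\sum_i \sum_j `|A i j|) * (`|v^T| * `|u^T|).
Proof.
rewrite /dot mulr_suml; apply: le_trans (ler_norm _) _.
apply: le_trans (ler_norm_sum _ _ _) _; apply: ler_sum => i _.
rewrite normrM mxE mulrCA; apply: ler_pM => //.
  by have := mxE_le_mx_norm v^T 0 i; rewrite mxE.
rewrite mulr_suml; apply: le_trans (ler_norm_sum _ _ _) (ler_sum _ _) => j _.
by rewrite normrM ler_wpM2l //; have := mxE_le_mx_norm u^T 0 j; rewrite mxE.
Qed.

Variables (np : 'cV[R]_n -> R) (nd : 'cV[R]_m -> R).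
Hypotheses (np_norm : is_norm np) (nd_norm : is_norm nd).

Lemma dot_le_op_norm (u : 'cV[R]_n) (v : 'cV[R]_m) :
  dot v (A *m u) <= op_norm np nd A * (nd v * np u).
Proof.
have [->|u0] := eqVneq u 0; first by rewrite mulmx0 dot0r (is_norm0 np_norm) !mulr0.
have [->|v0] := eqVneq v 0; first by rewrite dot0l (is_norm0 nd_norm) mul0r mulr0.
have [cp cp0 hcp] := is_norm_ge_mx_norm np_norm.
have [cd cd0 hcd] := is_norm_ge_mx_norm nd_norm.
set SA := \sum_i \sum_j `|A i j|.
have SA0 : 0 <= SA by do 2![apply: sumr_ge0 => ? _].
have ratio_le u' v' : u' != 0 -> v' != 0 ->
    dot v' (A *m u') / (nd v' * np u') <= SA / (cp * cd).
  move=> u'0 v'0; have nu := is_norm_gt0 np_norm u'0.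
  have nv := is_norm_gt0 nd_norm v'0.
  rewrite ler_pdivrMr ?mulr_gt0 //; apply: le_trans (dot_le_mx_norm u' v') _.
  have -> : SA / (cp * cd) * (nd v' * np u') = SA * (nd v' / cd * (np u' / cp)).
    by field; rewrite !lt0r_neq0.
  rewrite ler_wpM2l // ler_pM // ler_pdivlMr // mulrC.
  - by have := hcd v'^T; rewrite trmxK.
  - by have := hcp u'^T; rewrite trmxK.
set E := [set r : R | exists (u : 'cV[R]_n) (v : 'cV[R]_m),
        [/\ u != 0, v != 0 & r = dot v (A *m u) / (nd v * np u)]].
have E_sup : has_sup E.
  split; first by exists (dot v (A *m u) / (nd v * np u)), u, v.
  by exists (SA / (cp * cd)) => _ [u' [v' [u'0 v'0 ->]]]; exact: ratio_le.
have /(sup_upper_bound E_sup) : E (dot v (A *m u) / (nd v * np u)).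
  by exists u, v.
by rewrite -/(op_norm np nd A) ler_pdivrMr ?mulr_gt0 ?is_norm_gt0.
Qed.

End OperatorNorm.

Section DirectionalDerivative.
Variables (R : realType) (n : nat) (F : 'cV[R]_n -> R) (x v : 'cV[R]_n).

Lemma grad_dot : dot (grad F x) v = 'd F x v.
Proof.
have -> : v = \sum_i v i 0 *: delta_mx i 0.
  by rewrite [LHS]matrix_sum_delta; apply: eq_bigr => i _; rewrite big_ord1.
rewrite linear_sum dot_sumr; apply: eq_bigr => i _.
by rewrite linearZ dotZr /dot (bigD1 i) //= big1 => [|j ji];
  rewrite !mxE ?eqxx ?mulr1 ?addr0 ?(negbTE ji) ?mulr0 // mulrC.
Qed.

Hypothesis F_diff : differentiable F x.

Lemma difference_quotient_cvg :
  (fun t : R => t^-1 * (F (x + t *: v) - F x)) @ 0^'+ --> dot (grad F x) v.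
Proof.
rewrite grad_dot -deriveE //; apply: cvg_dnbhs_at_right.
have -> : (fun t : R => t^-1 * (F (x + t *: v) - F x)) =
          (fun t => t^-1 *: ((F \o shift x) (t *: v) - F x)).
  by apply/funext => t; rewrite [x + _]addrC.
exact: diff_derivable.
Qed.

Lemma grad_dot_ge c :
  (forall t, 0 < t < 1 -> t * c <= F (x + t *: v) - F x) -> c <= dot (grad F x) v.
Proof.
move=> Fc; apply: cvgr_to_ge difference_quotient_cvg _.
near=> t; have /andP[t0 t1] : 0 < t < 1.
  by apply/andP; split; near: t; [exact: nbhs_right_gt | exact: nbhs_right_lt].
by rewrite ler_pdivlMl // Fc // t0.
Unshelve. all: by end_near.
Qed.

Lemma grad_dot_le c :
  (forall t, 0 < t < 1 -> F (x + t *: v) - F x <= t * c) -> dot (grad F x) v <= c.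
Proof.
move=> Fc; apply: cvgr_to_le difference_quotient_cvg _.
near=> t; have /andP[t0 t1] : 0 < t < 1.
  by apply/andP; split; near: t; [exact: nbhs_right_gt | exact: nbhs_right_lt].
by rewrite ler_pdivrMl // Fc // t0.
Unshelve. all: by end_near.
Qed.

End DirectionalDerivative.

Section ExtendedConvexFunction.
Variables (R : realType) (n : nat).
Implicit Types (F : 'cV[R]_n -> \bar R) (x y : 'cV[R]_n).
Local Open Scope ereal_scope.

Lemma rfunE F x : no_minf F -> F x < +oo -> F x = (rfun F x)%:E.
Proof. by move=> FN Fx; rewrite fineK // fin_numE FN -ltey Fx. Qed.

Lemma rfunZ (c : R) F x :
  (0 < c)%R -> rfun (fun u => c%:E * F u) x = (c * rfun F x)%R.
Proof.
move=> c0; rewrite /rfun; case: (F x) => [r| |] //=.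
all: by rewrite ?gt0_muley ?gt0_muleNy ?lte_fin ?mulr0.
Qed.

Lemma edomZ (c : R) F x : (0 < c)%R -> (c%:E * F x < +oo) = (F x < +oo).
Proof.
move=> c0; case: (F x) => [r| |] //=.
all: by rewrite ?gt0_muley ?gt0_muleNy ?lte_fin ?ltry ?ltNye.
Qed.

Lemma no_minfZ (c : R) F : (0 < c)%R -> no_minf F -> no_minf (fun u => c%:E * F u).
Proof.
by move=> c0 FN u; move: (FN u); case: (F u) => [r| |] //= _; rewrite gt0_muley ?lte_fin.
Qed.

Lemma convex_funZ (c : R) F :
  (0 < c)%R -> no_minf F -> convex_fun F -> convex_fun (fun u => c%:E * F u).
Proof.
move=> c0 FN Fc x y t /[dup] t01 /andP[t0 t1]; have Fxy := Fc x y t t01.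
have cE : 0 <= c%:E by rewrite lee_fin ltW.
have posy (s : R) : (0 < s)%R -> s%:E * +oo = +oo.
  by move=> s0; rewrite gt0_muley ?lte_fin.
apply: le_trans (lee_wpmul2l cE Fxy) _.
move: (FN x) (FN y); case: (F x) => [a| |] // _; case: (F y) => [b| |] // _.
  by rewrite -!EFinM -!EFinD lee_fin; lra.
all: by rewrite !posy ?subr_gt0 // -?EFinM ?addey ?addye ?leey.
Qed.

Lemma convex_fun_segment F x y t : no_minf F -> convex_fun F ->
  F x < +oo -> F y < +oo -> (0 < t < 1)%R ->
  F (y + t *: (x - y))%R <= (t * rfun F x + (1 - t) * rfun F y)%:E.
Proof.
move=> FN Fc Fx Fy t01; have := Fc x y t t01.
rewrite (rfunE FN Fx) (rfunE FN Fy) -!EFinM -EFinD.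
by rewrite scalerBr scalerBl scale1r addrCA.
Qed.

Lemma convex_fun_grad_le F x y : no_minf F -> convex_fun F ->
  F x < +oo -> F y < +oo -> differentiable (rfun F) y ->
  (rfun F y + dot (grad (rfun F) y) (x - y) <= rfun F x)%R.
Proof.
move=> FN Fc Fx Fy Fd.
suff : (dot (grad (rfun F) y) (x - y) <= rfun F x - rfun F y)%R by lra.
apply: grad_dot_le => // t t01.
have := convex_fun_segment FN Fc Fx Fy t01.
move=> /[dup] /le_lt_trans /(_ (ltry _)) Ft; rewrite (rfunE FN Ft) lee_fin; lra.
Qed.

Lemma avg_recr (xs : nat -> 'cV[R]_n) k : (0 < k)%N ->
  avg xs k.+1 = (k.+1%:R^-1 *: xs k.+1 + (1 - k.+1%:R^-1) *: avg xs k)%R.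
Proof.
move=> k0; rewrite /avg big_nat_recr //= scalerA scalerDr addrC; congr (_ + _)%R.
congr (_ *: _)%R; have kn0 : (k%:R != 0 :> R)%R by rewrite pnatr_eq0 -lt0n.
by rewrite -natr1; field; rewrite kn0 natr1 pnatr_eq0.
Qed.

Lemma jensen_avg F (xs : nat -> 'cV[R]_n) (r : nat -> R) k : convex_fun F ->
  (forall i, (0 < i)%N -> F (xs i) <= (r i)%:E) -> (0 < k)%N ->
  F (avg xs k) <= (k%:R^-1 * \sum_(1 <= i < k.+1) r i)%:E.
Proof.
move=> Fc Fr; elim: k => [//|[_ _|k IH _]].
  by rewrite /avg !big_nat1 invr1 scale1r mul1r Fr.
rewrite avg_recr //; set t := (k.+2%:R^-1)%R.
have t0 : (0 < t)%R by rewrite invr_gt0 ltr0n.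
have t1 : (t < 1)%R by rewrite invf_lt1 ?ltr0n // ltr1n.
apply: le_trans (Fc _ _ _ _) _; first by rewrite t0 t1.
have t1' : 0 <= (1 - t)%:E by rewrite lee_fin subr_ge0 ltW.
apply: le_trans (leeD (lee_wpmul2l (ltW (t0 : 0 < t%:E)) (Fr k.+2 isT))
                      (lee_wpmul2l t1' (IH isT))) _.
rewrite -!EFinM -EFinD lee_fin (@big_nat_recr _ _ _ k.+2 1%N) //= /t.
have e : ((1 - k.+2%:R^-1) * k.+1%:R^-1 = k.+2%:R^-1 :> R)%R.
  have k0 : (0 <= k%:R :> R)%R by [].
  by rewrite -natr1; field; apply/andP; split; apply: lt0r_neq0; lra.
by rewrite mulrA e mulrDr addrC.
Qed.

Lemma jensen_avg_rfun F (xs : nat -> 'cV[R]_n) k : no_minf F -> convex_fun F ->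
  (forall i, F (xs i.+1) < +oo) -> (0 < k)%N ->
  F (avg xs k) < +oo /\
  (k%:R * rfun F (avg xs k) <= \sum_(0 <= i < k) rfun F (xs i.+1))%R.
Proof.
move=> FN Fc Fxs k0.
have J := jensen_avg (r := fun i => rfun F (xs i)) Fc _ k0.
have /J {}J : forall i, (0 < i)%N -> F (xs i) <= (rfun F (xs i))%:E.
  by case=> // i _; rewrite -rfunE.
have Fa := le_lt_trans J (ltry _); split=> //.
by move: J; rewrite (rfunE FN Fa) lee_fin big_add1 /= -ler_pdivlMl ?ltr0n.
Qed.

End ExtendedConvexFunction.

Section ConvexConjugate.
Variables (R : realType) (m : nat) (g : 'cV[R]_m -> \bar R).
Hypothesis g_no_minf : no_minf g.
Local Open Scope ereal_scope.

Lemma conj_no_minf : (exists y, g y < +oo) -> no_minf (conj_fun g).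
Proof.
move=> [y gy] z; apply/negP => /eqP gz.
have : (dot z y)%:E - g y <= conj_fun g z by apply: ereal_sup_ubound; exists y.
by rewrite gz leeNy_eq (rfunE g_no_minf gy) -EFinB.
Qed.

Lemma conj_convex : convex_fun (conj_fun g).
Proof.
move=> z1 z2 t /andP[t0 t1]; apply: ge_ereal_sup => _ [y _ <-].
have [gy|] := ltP (g y) +oo; last by rewrite leye_eq => /eqP ->; rewrite addeNy leNye.
rewrite (rfunE g_no_minf gy).
have conj_ge z : (dot z y - rfun g y)%:E <= conj_fun g z.
  by apply: ereal_sup_ubound; exists y => //; rewrite (rfunE g_no_minf gy).
have t1' : 0 <= (1 - t)%:E by rewrite lee_fin subr_ge0 ltW.
apply: le_trans (leeD (lee_wpmul2l (ltW (t0 : 0 < t%:E)) (conj_ge z1))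
                      (lee_wpmul2l t1' (conj_ge z2))).
by rewrite -!EFinM -!EFinD lee_fin dotDl !dotZl; lra.
Qed.

End ConvexConjugate.

Section BregmanProx.
Variables (R : realType) (n : nat) (phi : 'cV[R]_n -> \bar R).
Implicit Types (F : 'cV[R]_n -> \bar R) (a x y : 'cV[R]_n).

Definition rbreg x y : R :=
  rfun phi x - rfun phi y - dot (grad (rfun phi) y) (x - y).

Lemma rbreg_three_point x xp y :
  rbreg x y - rbreg xp y - rbreg x xp =
  dot (grad (rfun phi) xp - grad (rfun phi) y) (x - xp).
Proof.
rewrite /rbreg; move: (grad _ y) (grad _ xp) => gy gxp.
by rewrite dotBl !dotBr; ring.
Qed.

Lemma prox_interior F y a x : prox_well_defined phi F ->
  interior (edom phi) y -> is_prox phi F y a x -> interior (edom phi) x.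
Proof. by move=> /(_ a y) wd /wd [x' [x'int _ uniq]] /uniq ->. Qed.

Hypotheses (phi_no_minf : no_minf phi) (phi_convex : convex_fun phi).
Local Open Scope ereal_scope.

Lemma breg_rbreg x y : phi x < +oo -> phi y < +oo -> breg phi x y = (rbreg x y)%:E.
Proof.
move=> phix phiy; rewrite /breg phix /rbreg.
by rewrite (rfunE phi_no_minf phix) (rfunE phi_no_minf phiy) -!EFinD.
Qed.

(* First-order optimality of [xp] in the direction of [x]: minimality of [xp]
   and convexity of [F] bound from below the difference quotients of [phi]
   along the segment, whose limit is the gradient of [phi] at [xp]. *)
Lemma prox_three_point F y a xp x : no_minf F -> convex_fun F ->
  phi y < +oo -> phi xp < +oo -> differentiable (rfun phi) xp ->
  is_prox phi F y a xp -> phi x < +oo -> F x < +oo ->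
  F xp < +oo /\
  (rfun F xp + dot a xp + rbreg xp y + rbreg x xp <=
   rfun F x + dot a x + rbreg x y)%R.
Proof.
move=> FN Fc phiy phixp phid prox phix Fx.
have := prox x; rewrite (breg_rbreg phixp phiy) (breg_rbreg phix phiy).
rewrite (rfunE FN Fx) -!EFinD => prox_x.
have Fxp : F xp < +oo.
  by rewrite ltey; apply: contraTneq prox_x => ->; rewrite !addye.
split=> //.
have key : (rfun F xp - rfun F x - dot a (x - xp) +
            dot (grad (rfun phi) y) (x - xp) <= dot (grad (rfun phi) xp) (x - xp))%R.
  apply: grad_dot_ge => // t t01.
  have /[dup] /le_lt_trans /(_ (ltry _)) phixt :=
    convex_fun_segment phi_no_minf phi_convex phix phixp t01.
  have /[dup] /le_lt_trans /(_ (ltry _)) Fxt := convex_fun_segment FN Fc Fx Fxp t01.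
  rewrite (rfunE FN Fxt) lee_fin => F_convex _.
  have := prox (xp + t *: (x - xp))%R.
  rewrite (breg_rbreg phixp phiy) (breg_rbreg phixt phiy).
  rewrite (rfunE FN Fxp) (rfunE FN Fxt) -!EFinD lee_fin /rbreg.
  have -> : (dot a (xp + t *: (x - xp)) = dot a xp + t * dot a (x - xp))%R.
    by rewrite dotDr dotZr.
  have -> : (dot (grad (rfun phi) y) (xp + t *: (x - xp) - y) =
             dot (grad (rfun phi) y) (xp - y) + t * dot (grad (rfun phi) y) (x - xp))%R.
    by rewrite -dotZr -dotDr addrAC.
  lra.
have three_point := rbreg_three_point x xp y; rewrite dotBl in three_point.
have a_lin : (dot a x - dot a xp = dot a (x - xp))%R by rewrite dotBr.
(* Generalizing the gradients keeps [lra] from unfolding the differentials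
   when it compares atoms. *)
move: key three_point a_lin.
by move: (grad (rfun phi) xp) (grad (rfun phi) y) => gxp gy; lra.
Qed.

End BregmanProx.

(* Weighted Young inequality: the step-size condition is exactly what makes
   the remaining quadratic form nonnegative. *)
Lemma young_step_size (R : realFieldType) (M L sigma tau a b : R) :
  0 < tau -> 0 < sigma -> sigma * tau * M ^+ 2 + tau * L <= 1 ->
  M * (b * a) <= (tau^-1 - L) * (2^-1 * a ^+ 2) + sigma^-1 * (2^-1 * b ^+ 2).
Proof.
move=> tau0 sigma0 step; rewrite -subr_ge0.
have -> : (tau^-1 - L) * (2^-1 * a ^+ 2) + sigma^-1 * (2^-1 * b ^+ 2) - M * (b * a)
   = (2 * sigma * tau)^-1 * (tau * (sigma * M * a - b) ^+ 2
        + sigma * a ^+ 2 * (1 - tau * L - sigma * tau * M ^+ 2)) :> R.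
  by field; rewrite !lt0r_neq0.
apply: mulr_ge0; first by rewrite invr_ge0 !mulr_ge0 ?ltW.
have slack : 0 <= 1 - tau * L - sigma * tau * M ^+ 2 by lra.
apply: addr_ge0; first by rewrite mulr_ge0 ?sqr_ge0 ?ltW.
apply: mulr_ge0 => //; apply: mulr_ge0; [exact: ltW | exact: sqr_ge0].
Qed.

Section Coupling.
Variables (R : realType) (m n : nat) (A : 'M[R]_(m, n)).
Variables (np : 'cV[R]_n -> R) (nd : 'cV[R]_m -> R) (L sigma tau : R).
Hypotheses (np_norm : is_norm np) (nd_norm : is_norm nd).
Hypotheses (sigma_gt0 : 0 < sigma) (tau_gt0 : 0 < tau).
Hypothesis step_size : sigma * tau * op_norm np nd A ^+ 2 + tau * L <= 1.

Lemma coupling_le (u : 'cV[R]_n) (w : 'cV[R]_m) (Dp Dd : R) :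
  2^-1 * np u ^+ 2 <= Dp -> 2^-1 * nd w ^+ 2 <= Dd ->
  `|dot w (A *m u)| <= (tau^-1 - L) * Dp + sigma^-1 * Dd.
Proof.
move=> Dpu Ddw.
have tauL : 0 <= tau^-1 - L.
  rewrite subr_ge0 -[tau^-1]mulr1 ler_pdivlMl //; apply: le_trans step_size.
  by rewrite lerDr mulr_ge0 ?sqr_ge0 // mulr_ge0 // ltW.
have young := young_step_size (np u) (nd w) tau_gt0 sigma_gt0 step_size.
have bound : (tau^-1 - L) * (2^-1 * np u ^+ 2) + sigma^-1 * (2^-1 * nd w ^+ 2) <=
             (tau^-1 - L) * Dp + sigma^-1 * Dd.
  by rewrite lerD // ler_wpM2l // invr_ge0 ltW.
have le_bound v : np v = np u -> dot w (A *m v) <= (tau^-1 - L) * Dp + sigma^-1 * Dd.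
  move=> npv; apply: le_trans (dot_le_op_norm A np_norm nd_norm v w) _.
  by rewrite npv; apply: le_trans young bound.
rewrite ler_norml lerNl -dotNr -mulmxN !le_bound //; exact: is_normN.
Qed.

End Coupling.

Section CondatVu.
Variables (R : realType) (m n : nat).
Variables (f h : 'cV[R]_n -> \bar R) (gs : 'cV[R]_m -> \bar R) (A : 'M[R]_(m, n)).
Variables (phip : 'cV[R]_n -> \bar R) (phid : 'cV[R]_m -> \bar R).
Variables (np : 'cV[R]_n -> R) (nd : 'cV[R]_m -> R) (L sigma tau : R).
Hypotheses (f_no_minf : no_minf f) (f_convex : convex_fun f).
Hypotheses (h_no_minf : no_minf h) (h_convex : convex_fun h).
Hypothesis h_diff : forall x, edom h x -> diff_at (rfun h) x.
Hypotheses (gs_no_minf : no_minf gs) (gs_convex : convex_fun gs).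
Hypotheses (phip_no_minf : no_minf phip) (phip_convex : convex_fun phip).
Hypothesis phip_diff : forall x, interior (edom phip) x -> diff_at (rfun phip) x.
Hypotheses (phid_no_minf : no_minf phid) (phid_convex : convex_fun phid).
Hypothesis phid_diff : forall z, interior (edom phid) z -> diff_at (rfun phid) z.
Hypotheses (np_norm : is_norm np) (nd_norm : is_norm nd).
Hypothesis phip_strong : forall x x', edom phip x -> interior (edom phip) x' ->
  ((2%:R^-1 * np (x - x') ^+ 2)%:E <= breg phip x x')%E.
Hypothesis phid_strong : forall z z', edom phid z -> interior (edom phid) z' ->
  ((2%:R^-1 * nd (z - z') ^+ 2)%:E <= breg phid z z')%E.
Hypothesis dom_phip_h : edom phip `<=` edom h.
Hypothesis h_smooth : forall x x', edom phip x -> interior (edom phip) x' ->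
  (h x - h x' - (dot (grad (rfun h) x') (x - x'))%:E <= L%:E * breg phip x x')%E.
Hypotheses (L_ge0 : 0 <= L) (sigma_gt0 : 0 < sigma) (tau_gt0 : 0 < tau).
Hypothesis step_size : sigma * tau * op_norm np nd A ^+ 2 + tau * L <= 1.

Definition rlagr (x : 'cV[R]_n) (z : 'cV[R]_m) : R :=
  rfun f x + rfun h x + dot z (A *m x) - rfun gs z.

Lemma lagrE x z : (f x < +oo)%E -> (h x < +oo)%E -> (gs z < +oo)%E ->
  lagr f h gs A x z = (rlagr x z)%:E.
Proof.
move=> fx hx gz; rewrite /lagr (rfunE f_no_minf fx) (rfunE h_no_minf hx).
by rewrite (rfunE gs_no_minf gz) -EFinD !ltry /= -!EFinD.
Qed.

Lemma phip_strong_rbreg x x' : edom phip x -> interior (edom phip) x' ->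
  2^-1 * np (x - x') ^+ 2 <= rbreg phip x x'.
Proof.
move=> px px'; have := phip_strong px px'.
by rewrite (breg_rbreg phip_no_minf px (interior_subset px')) lee_fin.
Qed.

Lemma phid_strong_rbreg z z' : edom phid z -> interior (edom phid) z' ->
  2^-1 * nd (z - z') ^+ 2 <= rbreg phid z z'.
Proof.
move=> dz dz'; have := phid_strong dz dz'.
by rewrite (breg_rbreg phid_no_minf dz (interior_subset dz')) lee_fin.
Qed.

Variables (x : 'cV[R]_n) (z : 'cV[R]_m).
Hypotheses (x_dom_f : edom f x) (x_dom_phip : edom phip x).
Hypotheses (z_dom_gs : edom gs z) (z_dom_phid : edom phid z).

Lemma primal_update_le xi xn w :
  interior (edom phip) xi -> interior (edom phip) xn ->
  is_prox phip (fun u => tau%:E * f u)%E xi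
    (tau *: (A^T *m w) + tau *: grad (rfun h) xi) xn ->
  (f xn < +oo)%E /\
  rfun f xn + rfun h xn - (rfun f x + rfun h x) <=
  dot w (A *m x) - dot w (A *m xn) + L * rbreg phip xn xi +
  tau^-1 * (rbreg phip x xi - rbreg phip x xn - rbreg phip xn xi).
Proof.
move=> xi_int xn_int prox.
have xi_dom := interior_subset xi_int; have xn_dom := interior_subset xn_int.
have hxi := dom_phip_h xi_dom; have hxn := dom_phip_h xn_dom.
have hx := dom_phip_h x_dom_phip.
have [fxn three_point] := prox_three_point phip_no_minf phip_convex
  (no_minfZ tau_gt0 f_no_minf) (convex_funZ tau_gt0 f_no_minf f_convex)
  xi_dom xn_dom (phip_diff xn_int) prox x_dom_phip
  (etrans (edomZ _ _ tau_gt0) x_dom_f).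
rewrite edomZ // in fxn; split => //.
rewrite !rfunZ // !dotDl !dotZl !dot_trmx in three_point.
have := h_smooth xn_dom xi_int.
rewrite (breg_rbreg phip_no_minf xn_dom xi_dom).
rewrite (rfunE h_no_minf hxi) (rfunE h_no_minf hxn) -!EFinB -EFinM lee_fin dotBr.
move=> /(ler_wpM2l (ltW tau_gt0)) smooth.
have := convex_fun_grad_le h_no_minf h_convex hx hxi (h_diff hxi).
rewrite dotBr => /(ler_wpM2l (ltW tau_gt0)) grad_le.
rewrite -lerBlDl ler_pdivlMl //.
move: three_point smooth grad_le; move: (grad (rfun h) xi) => gh; lra.
Qed.

Lemma dual_update_le zi zn u :
  interior (edom phid) zi -> interior (edom phid) zn ->
  is_prox phid (fun w => sigma%:E * gs w)%E zi (- sigma *: (A *m u)) zn ->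
  (gs zn < +oo)%E /\
  rfun gs zn - rfun gs z <= dot zn (A *m u) - dot z (A *m u) +
  sigma^-1 * (rbreg phid z zi - rbreg phid z zn - rbreg phid zn zi).
Proof.
move=> zi_int zn_int prox.
have [gzn three_point] := prox_three_point phid_no_minf phid_convex
  (no_minfZ sigma_gt0 gs_no_minf) (convex_funZ sigma_gt0 gs_no_minf gs_convex)
  (interior_subset zi_int) (interior_subset zn_int) (phid_diff zn_int) prox
  z_dom_phid (etrans (edomZ _ _ sigma_gt0) z_dom_gs).
rewrite edomZ // in gzn; split => //.
rewrite !rfunZ // !dotZl !(dotC (A *m u)) in three_point.
by rewrite -lerBlDl ler_pdivlMl //; lra.
Qed.

Definition energy (s : R) (xi : 'cV[R]_n) (zi : 'cV[R]_m) : R :=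
  tau^-1 * rbreg phip x xi + sigma^-1 * rbreg phid z zi +
  s * dot (zi - z) (A *m (xi - x)).

Lemma energy_bounds s xi zi : `|s| = 1 ->
  interior (edom phip) xi -> interior (edom phid) zi ->
  0 <= energy s xi zi <= 2 * (tau^-1 * rbreg phip x xi + sigma^-1 * rbreg phid z zi).
Proof.
move=> s1 xi_int zi_int.
have Dp := phip_strong_rbreg x_dom_phip xi_int; rewrite (is_normB np_norm) in Dp.
have Dd := phid_strong_rbreg z_dom_phid zi_int; rewrite (is_normB nd_norm) in Dd.
have := coupling_le np_norm nd_norm sigma_gt0 tau_gt0 step_size Dp Dd.
rewrite -[X in X <= _]mul1r -{1}s1 -normrM ler_norml => /andP[lo hi].
have LDp : 0 <= L * rbreg phip x xi.
  by rewrite mulr_ge0 // (le_trans _ Dp) // mulr_ge0 ?sqr_ge0.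
by rewrite /energy; apply/andP; split; lra.
Qed.

Lemma primal_step xi zi xn zn :
  interior (edom phip) xi -> interior (edom phid) zi ->
  interior (edom phip) xn -> interior (edom phid) zn ->
  is_prox phip (fun u => tau%:E * f u)%E xi
    (tau *: (A^T *m zi) + tau *: grad (rfun h) xi) xn ->
  is_prox phid (fun w => sigma%:E * gs w)%E zi
    (- sigma *: (A *m (2%:R *: xn - xi))) zn ->
  [/\ (f xn < +oo)%E, (gs zn < +oo)%E &
      rlagr xn z - rlagr x zn <= energy (-1) xi zi - energy (-1) xn zn].
Proof.
move=> xi_int zi_int xn_int zn_int prox_x prox_z.
have [fxn X] := primal_update_le xi_int xn_int prox_x.
have [gzn Z] := dual_update_le zi_int zn_int prox_z.
have Dp := phip_strong_rbreg (interior_subset xn_int) xi_int.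
have Dd := phid_strong_rbreg (interior_subset zn_int) zi_int.
have := coupling_le np_norm nd_norm sigma_gt0 tau_gt0 step_size Dp Dd.
rewrite ler_norml => /andP[_ C]; split => //.
rewrite mulmxBr -scalemxAr !dotBr !dotZr in Z.
rewrite /rlagr /energy !dot_mulmxBB in C *; lra.
Qed.

Lemma dual_step xi zi xn zn :
  interior (edom phip) xi -> interior (edom phid) zi ->
  interior (edom phip) xn -> interior (edom phid) zn ->
  is_prox phid (fun w => sigma%:E * gs w)%E zi (- sigma *: (A *m xi)) zn ->
  is_prox phip (fun u => tau%:E * f u)%E xi
    (tau *: (A^T *m (2%:R *: zn - zi)) + tau *: grad (rfun h) xi) xn ->
  [/\ (f xn < +oo)%E, (gs zn < +oo)%E &
      rlagr xn z - rlagr x zn <= energy 1 xi zi - energy 1 xn zn].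
Proof.
move=> xi_int zi_int xn_int zn_int prox_z prox_x.
have [gzn Z] := dual_update_le zi_int zn_int prox_z.
have [fxn X] := primal_update_le xi_int xn_int prox_x.
have Dp := phip_strong_rbreg (interior_subset xn_int) xi_int.
have Dd := phid_strong_rbreg (interior_subset zn_int) zi_int.
have := coupling_le np_norm nd_norm sigma_gt0 tau_gt0 step_size Dp Dd.
rewrite ler_norml => /andP[C _]; split => //.
rewrite !dotBl !dotZl in X.
rewrite /rlagr /energy !dot_mulmxBB in C *; lra.
Qed.

Lemma condat_vu_descent xs zs :
  (forall i, interior (edom phip) (xs i) /\ interior (edom phid) (zs i)) ->
  primal_CV phip phid f h gs A sigma tau xs zs \/
  dual_CV phip phid f h gs A sigma tau xs zs ->
  exists2 s, `|s| = 1 & forall i,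
    [/\ (f (xs i.+1) < +oo)%E, (gs (zs i.+1) < +oo)%E &
        rlagr (xs i.+1) z - rlagr x (zs i.+1) <=
        energy s (xs i) (zs i) - energy s (xs i.+1) (zs i.+1)].
Proof.
move=> int [CV|CV]; [exists (-1) | exists 1]; rewrite ?normrN ?normr1 // => i;
  have [xi zi] := int i; have [xn zn] := int i.+1; have [prox1 prox2] := CV i.
- exact: primal_step.
- exact: dual_step.
Qed.

Lemma sum_gap_le xs zs s k : `|s| = 1 ->
  (forall i, interior (edom phip) (xs i) /\ interior (edom phid) (zs i)) ->
  (forall i, rlagr (xs i.+1) z - rlagr x (zs i.+1) <=
             energy s (xs i) (zs i) - energy s (xs i.+1) (zs i.+1)) ->
  \sum_(0 <= i < k) (rlagr (xs i.+1) z - rlagr x (zs i.+1)) <=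
  2 * (tau^-1 * rbreg phip x (xs 0%N) + sigma^-1 * rbreg phid z (zs 0%N)).
Proof.
move=> s1 int descent; apply: le_trans (ler_sum _ (fun i _ => descent i)) _.
rewrite (eq_bigr (fun i => - (energy s (xs i.+1) (zs i.+1) - energy s (xs i) (zs i))));
  last by move=> i _; rewrite opprB.
rewrite sumrN telescope_sumr // opprB.
have /andP[_ E0_le] := energy_bounds s1 (int 0%N).1 (int 0%N).2.
have /andP[Ek_ge0 _] := energy_bounds s1 (int k).1 (int k).2.
lra.
Qed.

Lemma lagr_avg_le xs zs k : (0 < k)%N ->
  (forall i, f (xs i.+1) < +oo)%E -> (forall i, h (xs i.+1) < +oo)%E ->
  (forall i, gs (zs i.+1) < +oo)%E ->
  (lagr f h gs A (avg xs k) z - lagr f h gs A x (avg zs k) <=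
   (k%:R^-1 * \sum_(0 <= i < k) (rlagr (xs i.+1) z - rlagr x (zs i.+1)))%:E)%E.
Proof.
move=> k0 fxs hxs gzs; have hx := dom_phip_h x_dom_phip.
have [fa Jf] := jensen_avg_rfun f_no_minf f_convex fxs k0.
have [ha Jh] := jensen_avg_rfun h_no_minf h_convex hxs k0.
have [ga Jg] := jensen_avg_rfun gs_no_minf gs_convex gzs k0.
have kk : k%:R * k%:R^-1 = 1 :> R by rewrite mulfV // pnatr_eq0 -lt0n.
have Dz : k%:R * dot z (A *m avg xs k) = \sum_(0 <= i < k) dot z (A *m xs i.+1).
  by rewrite /avg -scalemxAr dotZr mulrA kk mul1r mulmx_sumr dot_sumr big_add1.
have Dx : k%:R * dot (avg zs k) (A *m x) = \sum_(0 <= i < k) dot (zs i.+1) (A *m x).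
  by rewrite /avg dotZl mulrA kk mul1r dot_suml big_add1.
rewrite (lagrE fa ha z_dom_gs) (lagrE x_dom_f hx ga) -EFinB lee_fin.
rewrite ler_pdivlMl ?ltr0n //.
have Sx : \sum_(0 <= i < k) rlagr (xs i.+1) z =
    \sum_(0 <= i < k) rfun f (xs i.+1) + \sum_(0 <= i < k) rfun h (xs i.+1) +
    \sum_(0 <= i < k) dot z (A *m xs i.+1) - k%:R * rfun gs z.
  by rewrite /rlagr sumrB 2!big_split /= sumr_const_nat subn0 mulr_natl.
have Sz : \sum_(0 <= i < k) rlagr x (zs i.+1) =
    k%:R * (rfun f x + rfun h x) + \sum_(0 <= i < k) dot (zs i.+1) (A *m x) -
    \sum_(0 <= i < k) rfun gs (zs i.+1).
  by rewrite /rlagr sumrB big_split /= sumr_const_nat subn0 mulr_natl.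
rewrite sumrB Sx Sz /rlagr; lra.
Qed.

Lemma ergodic_rate xs zs k :
  (forall i, interior (edom phip) (xs i) /\ interior (edom phid) (zs i)) ->
  primal_CV phip phid f h gs A sigma tau xs zs \/
  dual_CV phip phid f h gs A sigma tau xs zs -> (0 < k)%N ->
  (lagr f h gs A (avg xs k) z - lagr f h gs A x (avg zs k) <=
   (2 / k%:R)%:E * ((tau^-1)%:E * breg phip x (xs 0%N)
                    + (sigma^-1)%:E * breg phid z (zs 0%N)))%E.
Proof.
move=> int CV k0; have [s s1 descent] := condat_vu_descent int CV.
have fxs i : (f (xs i.+1) < +oo)%E by case: (descent i).
have gzs i : (gs (zs i.+1) < +oo)%E by case: (descent i).
have hxs i : (h (xs i.+1) < +oo)%E := dom_phip_h (interior_subset (int i.+1).1).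
have gap i := let: And3 _ _ gap_le := descent i in gap_le.
apply: le_trans (lagr_avg_le k0 fxs hxs gzs) _.
rewrite (breg_rbreg phip_no_minf x_dom_phip (interior_subset (int 0%N).1)).
rewrite (breg_rbreg phid_no_minf z_dom_phid (interior_subset (int 0%N).2)).
rewrite -!EFinM lee_fin [leRHS]mulrAC [leRHS]mulrC ler_wpM2l ?invr_ge0 //.
exact: sum_gap_le s1 int gap.
Qed.

End CondatVu.

Lemma condat_vu_interior (R : realType) m n (f h : 'cV[R]_n -> \bar R)
    (gs : 'cV[R]_m -> \bar R) (A : 'M[R]_(m, n)) phip phid (sigma tau : R) xs zs :
  prox_well_defined phip (fun x => tau%:E * f x)%E ->
  prox_well_defined phid (fun z => sigma%:E * gs z)%E ->
  interior (edom phip) (xs 0%N) -> interior (edom phid) (zs 0%N) ->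
  primal_CV phip phid f h gs A sigma tau xs zs \/
  dual_CV phip phid f h gs A sigma tau xs zs ->
  forall i, interior (edom phip) (xs i) /\ interior (edom phid) (zs i).
Proof.
move=> wdp wdd x0 z0 CV; elim=> [//|i [xi zi]].
by case: CV => /(_ i) [prox1 prox2]; split;
  apply: prox_interior; eassumption.
Qed.

Theorem mainTheorem4 (R : realType) (m n : nat)
  (f h : 'cV[R]_n -> \bar R) (g : 'cV[R]_m -> \bar R) (A : 'M[R]_(m, n))
  (phip : 'cV[R]_n -> \bar R) (phid : 'cV[R]_m -> \bar R)
  (np : 'cV[R]_n -> R) (nd : 'cV[R]_m -> R) (L sigma tau : R)
  (xs : nat -> 'cV[R]_n) (zs : nat -> 'cV[R]_m) :
  (* f, g, h closed convex with values in R \cup {+oo} *)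
  no_minf f -> convex_fun f -> closed_fun f ->
  no_minf g -> convex_fun g -> closed_fun g ->
  no_minf h -> convex_fun h -> closed_fun h ->
  (* h differentiable on its open (convex) domain *)
  open (edom h) -> (forall x, edom h x -> diff_at (rfun h) x) ->
  (* f + h and g proper *)
  proper_fun (fun x => f x + h x)%E -> proper_fun g ->
  (* Bregman kernels, with well-defined prox operators *)
  bregman_kernel phip -> bregman_kernel phid ->
  prox_well_defined phip (fun x => tau%:E * f x)%E ->
  prox_well_defined phid (fun z => sigma%:E * conj_fun g z)%E ->
  (* strong convexity of the kernels w.r.t. norms *)
  is_norm np -> is_norm nd ->
  (forall x x', edom phip x -> interior (edom phip) x' ->
     ((2%:R^-1 * np (x - x') ^+ 2)%:E <= breg phip x x')%E) ->
  (forall z z', edom phid z -> interior (edom phid) z' ->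
     ((2%:R^-1 * nd (z - z') ^+ 2)%:E <= breg phid z z')%E) ->
  (* relative smoothness of h *)
  edom phip `<=` edom h -> 0 < L ->
  (forall x x', edom phip x -> interior (edom phip) x' ->
     (h x - h x' - (dot (grad (rfun h) x') (x - x'))%:E
        <= L%:E * breg phip x x')%E) ->
  (* existence of a saddle point *)
  (exists (xst : 'cV[R]_n) (zst : 'cV[R]_m),
     [/\ edom phip xst, edom phid zst,
         exists s, subgrad f xst s /\ s + grad (rfun h) xst + A^T *m zst = 0 &
         subgrad (conj_fun g) zst (A *m xst)]) ->
  (* step sizes *)
  0 < sigma -> 0 < tau ->
  sigma * tau * op_norm np nd A ^+ 2 + tau * L <= 1 ->
  (* initial point and iteration *)
  interior (edom phip) (xs 0%N) -> edom h (xs 0%N) ->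
  interior (edom phid) (zs 0%N) ->
  (primal_CV phip phid f h (conj_fun g) A sigma tau xs zs \/
   dual_CV phip phid f h (conj_fun g) A sigma tau xs zs) ->
  forall (k : nat) (x : 'cV[R]_n) (z : 'cV[R]_m), (1 <= k)%N ->
    edom f x -> edom phip x -> edom (conj_fun g) z -> edom phid z ->
    (lagr f h (conj_fun g) A (avg xs k) z - lagr f h (conj_fun g) A x (avg zs k)
     <= (2 / k%:R)%:E * ((tau^-1)%:E * breg phip x (xs 0%N)
                         + (sigma^-1)%:E * breg phid z (zs 0%N)))%E.
Proof.
move=> fN fC _ gN gC _ hN hC _ _ h_diff _ [_ g_proper] [phipN phipC _ [_ phip_diff _]]
  [phidN phidC _ [_ phid_diff _]] wdp wdd np_norm nd_norm phip_strong phid_strong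
  dom_phip_h /ltW L_ge0 h_smooth _ sigma_gt0 tau_gt0 step_size x0 _ z0 CV
  k x z k_gt0 x_dom_f x_dom_phip z_dom_gs z_dom_phid.
have gsN := conj_no_minf gN g_proper.
have gsC := conj_convex gN.
have int := condat_vu_interior wdp wdd x0 z0 CV.
exact: (ergodic_rate fN fC hN hC h_diff gsN gsC phipN phipC phip_diff
  phidN phidC phid_diff np_norm nd_norm phip_strong phid_strong dom_phip_h h_smooth
  L_ge0 sigma_gt0 tau_gt0 step_size x_dom_f x_dom_phip z_dom_gs z_dom_phid int CV k_gt0).
Qed.
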